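(* Let $X$ be a real Hilbert space, $C\subseteq X$ a closed convex set, $T:C\to C$ a nonexpansive map, $x_0\in C$, and let $p\in C$ be a fixed point of $T$. Let $N\in\mathbb{N}\setminus\{0\}$ satisfy $N\geq 2\|x_0-p\|$. For every $k\in\mathbb{N}$ and every monotone function $f:\mathbb{N}\to\mathbb{N}$ there exist $n\in\mathbb{N}$ with $n\leq 24N\big(w_{f,N}^{(R)}(0)+1\big)^2$ and $x\in C\cap B_N$ such that $$\|T(x)-x\|\leq\frac{1}{f(n)+1}\quad\text{and}\quad \forall y\in C\cap B_N\ \left(\|T(y)-y\|\leq \frac{1}{n+1}\ \to\ \langle x_0-x,\,y-x\rangle\leq\frac{1}{k+1}\right),$$ where $R:=4N^4(k+1)^2$ and $w_{f,N}(m):=\max\{f(24N(m+1)^2),\,24N(m+1)^2\}$.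
   Context: $B_N:=\{x\in X:\ \|x-p\|\leq N\}$ denotes the closed ball of radius $N$ centered at the fixed point $p$. A function $f:\mathbb{N}\to\mathbb{N}$ is called monotone if $f(n)\leq f(n+1)$ for all $n\in\mathbb{N}$. For $g:\mathbb{N}\to\mathbb{N}$, $g^{(R)}$ denotes the $R$-fold composition of $g$ with itself ($g^{(0)}$ is the identity). A map $T$ is nonexpansive if $\|T(x)-T(y)\|\leq\|x-y\|$ for all $x,y$. *)

From Stdlib Require Import Reals Lra Lia.
Open Scope R_scope.

Record HilbertSpace := {
  hcar :> Type;
  hzero : hcar;
  hadd : hcar -> hcar -> hcar;
  hopp : hcar -> hcar;
  hscal : R -> hcar -> hcar;
  hinner : hcar -> hcar -> R;
  hadd_assoc : forall x y z, hadd x (hadd y z) = hadd (hadd x y) z;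
  hadd_comm : forall x y, hadd x y = hadd y x;
  hadd_zero : forall x, hadd x hzero = x;
  hadd_opp : forall x, hadd x (hopp x) = hzero;
  hscal_one : forall x, hscal 1 x = x;
  hscal_assoc : forall a b x, hscal a (hscal b x) = hscal (a * b) x;
  hscal_add_r : forall a x y, hscal a (hadd x y) = hadd (hscal a x) (hscal a y);
  hscal_add_l : forall a b x, hscal (a + b) x = hadd (hscal a x) (hscal b x);
  hinner_sym : forall x y, hinner x y = hinner y x;
  hinner_add_l : forall x y z, hinner (hadd x y) z = hinner x z + hinner y z;
  hinner_scal_l : forall a x y, hinner (hscal a x) y = a * hinner x y;
  hinner_pos : forall x, 0 <= hinner x x;
  hinner_def : forall x, hinner x x = 0 -> x = hzero;
  hcomplete : forall u : nat -> hcar,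
    (forall eps, 0 < eps -> exists M : nat, forall m n : nat,
        (M <= m)%nat -> (M <= n)%nat ->
        sqrt (hinner (hadd (u m) (hopp (u n))) (hadd (u m) (hopp (u n)))) < eps) ->
    exists l : hcar, forall eps, 0 < eps -> exists M : nat, forall n : nat,
        (M <= n)%nat ->
        sqrt (hinner (hadd (u n) (hopp l)) (hadd (u n) (hopp l))) < eps
}.

Arguments hzero {h}.
Arguments hadd {h}.
Arguments hopp {h}.
Arguments hscal {h}.
Arguments hinner {h}.

Definition hsub {X : HilbertSpace} (x y : X) : X := hadd x (hopp y).
Definition hnorm {X : HilbertSpace} (x : X) : R := sqrt (hinner x x).

Definition hclosed_set {X : HilbertSpace} (C : X -> Prop) : Prop :=
  forall (u : nat -> X) (l : X),
    (forall n, C (u n)) ->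
    (forall eps, 0 < eps -> exists M : nat, forall n : nat,
        (M <= n)%nat -> hnorm (hsub (u n) l) < eps) ->
    C l.

Definition hconvex_set {X : HilbertSpace} (C : X -> Prop) : Prop :=
  forall x y t, C x -> C y -> 0 <= t <= 1 ->
    C (hadd (hscal t x) (hscal (1 - t) y)).

(* T : C -> C nonexpansive, represented by T : X -> X mapping C into C. *)
Definition maps_into {X : HilbertSpace} (C : X -> Prop) (T : X -> X) : Prop :=
  forall x, C x -> C (T x).

Definition nonexpansive_on {X : HilbertSpace} (C : X -> Prop) (T : X -> X) : Prop :=
  forall x y, C x -> C y -> hnorm (hsub (T x) (T y)) <= hnorm (hsub x y).

Definition in_ball {X : HilbertSpace} (p : X) (N : nat) (x : X) : Prop :=
  hnorm (hsub x p) <= INR N.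

Definition monotone (f : nat -> nat) : Prop := forall n, (f n <= f (S n))%nat.

Definition w_fN (f : nat -> nat) (N : nat) (m : nat) : nat :=
  Nat.max (f (24 * N * (m + 1) ^ 2)%nat) (24 * N * (m + 1) ^ 2)%nat.

Definition iterate (g : nat -> nat) (R : nat) : nat -> nat := Nat.iter R g.

(* Suppose no [n] below the bound admits a metastable point.  Put
   [m_i = w_{f,N}^(i)(0)] and start from [z_R = p], at squared distance at most
   [N^2/4] from [x0].  Given a [1/(m_{i+1}+1)]-approximate fixed point [z] in the
   ball, let [n = 24 N (m_i+1)^2]; as [m_{i+1} >= f n, n], failure at [z] provides
   a [1/(n+1)]-approximate fixed point [y] with [<x0 - z, y - z> > a = 1/(k+1)].
   The point [z + t (y - z)], [t = a/(4N^2)], is a [1/(m_i+1)]-approximate fixed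
   point (by nonexpansiveness and convexity, which is what the rate [24 N (m+1)^2]
   is tuned for) and is closer to [x0]: the squared distance drops by [t a].
   After [R = 4 N^4 (k+1)^2] steps it would have dropped by [N^2], absurd. *)

From Stdlib Require Import Reals Lra Lia Classical.
Open Scope R_scope.

Lemma hinner_zero_l {X : HilbertSpace} (y : X) : hinner hzero y = 0.
Proof. pose proof (hinner_add_l X hzero hzero y) as H. rewrite hadd_zero in H. lra. Qed.

Lemma hinner_opp_l {X : HilbertSpace} (x y : X) : hinner (hopp x) y = - hinner x y.
Proof.
  pose proof (hinner_add_l X x (hopp x) y) as H.
  rewrite hadd_opp, hinner_zero_l in H. lra.
Qed.

Lemma hinner_add_r {X : HilbertSpace} (x y z : X) :
  hinner x (hadd y z) = hinner x y + hinner x z.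
Proof. rewrite hinner_sym, hinner_add_l, (hinner_sym _ y), (hinner_sym _ z). reflexivity. Qed.

Lemma hinner_scal_r {X : HilbertSpace} a (x y : X) : hinner x (hscal a y) = a * hinner x y.
Proof. rewrite hinner_sym, hinner_scal_l, (hinner_sym _ y). reflexivity. Qed.

Lemma hinner_opp_r {X : HilbertSpace} (x y : X) : hinner x (hopp y) = - hinner x y.
Proof. rewrite hinner_sym, hinner_opp_l, (hinner_sym _ y). reflexivity. Qed.

Lemma hinner_sub_l {X : HilbertSpace} (x y z : X) :
  hinner (hsub x y) z = hinner x z - hinner y z.
Proof. unfold hsub. rewrite hinner_add_l, hinner_opp_l. ring. Qed.

Lemma hinner_sub_r {X : HilbertSpace} (x y z : X) :
  hinner z (hsub x y) = hinner z x - hinner z y.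
Proof. unfold hsub. rewrite hinner_add_r, hinner_opp_r. ring. Qed.

Hint Rewrite @hinner_sub_l @hinner_sub_r @hinner_add_l @hinner_add_r
  @hinner_scal_l @hinner_scal_r @hinner_opp_l @hinner_opp_r : hinner_expand.

(* Expand all inner products, then identify [hinner v u] with [hinner u v]
   so that [ring] treats each pair as a single atom. *)
Ltac hinner_ring :=
  rewrite ?Rpow_mult_distr; unfold hnorm; rewrite ?pow2_sqrt by apply hinner_pos;
  autorewrite with hinner_expand;
  repeat match goal with
  | |- context [hinner ?u ?v] =>
      match goal with |- context [hinner v u] =>
        progress rewrite (hinner_sym _ v u) end
  end;
  ring.

Lemma hnorm_sqr {X : HilbertSpace} (u : X) : hnorm u ^ 2 = hinner u u.
Proof. unfold hnorm. rewrite pow2_sqrt; [reflexivity | apply hinner_pos]. Qed.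

Lemma hnorm_ge0 {X : HilbertSpace} (u : X) : 0 <= hnorm u.
Proof. apply sqrt_pos. Qed.

Lemma hnorm_le_of_sqr {X : HilbertSpace} (u : X) r :
  0 <= r -> hnorm u ^ 2 <= r ^ 2 -> hnorm u <= r.
Proof. pose proof (hnorm_ge0 u). nra. Qed.

Lemma hnorm_eq_of_sqr {X : HilbertSpace} (u : X) r :
  0 <= r -> hnorm u ^ 2 = r ^ 2 -> hnorm u = r.
Proof. intros Hr Hu. apply Rsqr_inj; [apply hnorm_ge0 | exact Hr | unfold Rsqr; nra]. Qed.

Lemma hnorm_eq0 {X : HilbertSpace} (u : X) : hnorm u = 0 -> u = hzero.
Proof.
  intro H. apply hinner_def. rewrite <- hnorm_sqr, H. ring.
Qed.

Lemma cauchy_schwarz {X : HilbertSpace} (u v : X) : hinner u v <= hnorm u * hnorm v.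
Proof.
  pose proof (hnorm_ge0 u) as Hu. pose proof (hnorm_ge0 v) as Hv.
  destruct (Req_dec (hnorm u * hnorm v) 0) as [H0 | H0].
  - destruct (Rmult_integral _ _ H0) as [Hu0 | Hv0].
    + rewrite Hu0, (hnorm_eq0 u Hu0), hinner_zero_l. lra.
    + rewrite Hv0, (hnorm_eq0 v Hv0), hinner_sym, hinner_zero_l. lra.
  - assert (Hsq : 0 <= hnorm u * hnorm v * (hnorm u * hnorm v - hinner u v)).
    { pose proof (hinner_pos X (hsub (hscal (hnorm v) u) (hscal (hnorm u) v))) as P.
      autorewrite with hinner_expand in P. rewrite (hinner_sym _ v u), <- !hnorm_sqr in P.
      nra. }
    assert (0 < hnorm u * hnorm v) by (pose proof (Rmult_le_pos _ _ Hu Hv); lra).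
    nra.
Qed.

Lemma hnorm_subC {X : HilbertSpace} (a b : X) : hnorm (hsub a b) = hnorm (hsub b a).
Proof. unfold hnorm. f_equal. hinner_ring. Qed.

Lemma hnorm_sub_diag {X : HilbertSpace} (a : X) : hnorm (hsub a a) = 0.
Proof. rewrite <- sqrt_0. unfold hnorm. f_equal. hinner_ring. Qed.

Lemma hnorm_sub_triangle {X : HilbertSpace} (a b c : X) :
  hnorm (hsub a c) <= hnorm (hsub a b) + hnorm (hsub b c).
Proof.
  assert (E : hnorm (hsub a c) ^ 2 = hnorm (hsub a b) ^ 2
      + 2 * hinner (hsub a b) (hsub b c) + hnorm (hsub b c) ^ 2) by hinner_ring.
  pose proof (cauchy_schwarz (hsub a b) (hsub b c)).
  pose proof (hnorm_ge0 (hsub a b)). pose proof (hnorm_ge0 (hsub b c)).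
  apply hnorm_le_of_sqr; nra.
Qed.

Definition hsegment {X : HilbertSpace} (z y : X) (t : R) : X :=
  hadd (hscal t y) (hscal (1 - t) z).

Lemma hnorm_segment_sub_sqr {X : HilbertSpace} (z y w : X) t :
  hnorm (hsub (hsegment z y t) w) ^ 2 = (1 - t) * hnorm (hsub z w) ^ 2
    + t * hnorm (hsub y w) ^ 2 - t * (1 - t) * hnorm (hsub z y) ^ 2.
Proof. unfold hsegment. hinner_ring. Qed.

Lemma hnorm_sub_segment_sqr {X : HilbertSpace} (w z y : X) t :
  hnorm (hsub w (hsegment z y t)) ^ 2 = hnorm (hsub w z) ^ 2
    - 2 * t * hinner (hsub w z) (hsub y z) + t ^ 2 * hnorm (hsub y z) ^ 2.
Proof. unfold hsegment. hinner_ring. Qed.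

Lemma hnorm_sub_segment_l {X : HilbertSpace} (z y : X) t : 0 <= t ->
  hnorm (hsub z (hsegment z y t)) = t * hnorm (hsub z y).
Proof.
  intro Ht. pose proof (hnorm_ge0 (hsub z y)).
  apply hnorm_eq_of_sqr; [nra |]. unfold hsegment. hinner_ring.
Qed.

Lemma hnorm_sub_segment_r {X : HilbertSpace} (z y : X) t : t <= 1 ->
  hnorm (hsub y (hsegment z y t)) = (1 - t) * hnorm (hsub z y).
Proof.
  intro Ht. pose proof (hnorm_ge0 (hsub z y)).
  apply hnorm_eq_of_sqr; [nra |]. unfold hsegment. hinner_ring.
Qed.

Lemma in_ball_segment {X : HilbertSpace} (p z y : X) N t :
  0 <= t <= 1 -> in_ball p N z -> in_ball p N y -> in_ball p N (hsegment z y t).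
Proof.
  unfold in_ball. intros Ht Hz Hy.
  pose proof (hnorm_ge0 (hsub z p)). pose proof (hnorm_ge0 (hsub y p)).
  assert (hnorm (hsub z p) ^ 2 <= INR N ^ 2) by (apply pow_incr; lra).
  assert (hnorm (hsub y p) ^ 2 <= INR N ^ 2) by (apply pow_incr; lra).
  assert (0 <= t * (1 - t) * hnorm (hsub z y) ^ 2)
    by (apply Rmult_le_pos; [nra | apply pow2_ge_0]).
  apply hnorm_le_of_sqr; [apply pos_INR |].
  rewrite hnorm_segment_sub_sqr. nra.
Qed.

Lemma in_ball_sub_le {X : HilbertSpace} (p z y : X) N :
  in_ball p N z -> in_ball p N y -> hnorm (hsub z y) <= 2 * INR N.
Proof.
  unfold in_ball. intros Hz Hy.
  pose proof (hnorm_sub_triangle z p y). rewrite (hnorm_subC p y) in *. lra.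
Qed.

(* Each endpoint lies within [eps] of its image, so [T s] stays close to both
   endpoints; the parallelogram-type identity for [s] then cancels the [D^2]
   terms and leaves [eps^2 + 4 t (1 - t) eps D]. *)
Lemma hnorm_displacement_segment_sqr {X : HilbertSpace} (C : X -> Prop) (T : X -> X)
    (z y : X) t eps :
  hconvex_set C -> nonexpansive_on C T -> C z -> C y -> 0 <= t <= 1 ->
  hnorm (hsub (T z) z) <= eps -> hnorm (hsub (T y) y) <= eps ->
  hnorm (hsub (T (hsegment z y t)) (hsegment z y t)) ^ 2
    <= eps ^ 2 + eps * hnorm (hsub z y).
Proof.
  intros HCcv HTne Cz Cy Ht Hz Hy.
  set (s := hsegment z y t).
  assert (Cs : C s) by (apply HCcv; auto).
  assert (Ez : hnorm (hsub z s) = t * hnorm (hsub z y)) by (apply hnorm_sub_segment_l; lra).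
  assert (Ey : hnorm (hsub y s) = (1 - t) * hnorm (hsub z y))
    by (apply hnorm_sub_segment_r; lra).
  set (D := hnorm (hsub z y)) in *.
  assert (HA : hnorm (hsub z (T s)) <= eps + t * D).
  { pose proof (hnorm_sub_triangle z (T z) (T s)). pose proof (HTne z s Cz Cs).
    rewrite (hnorm_subC z (T z)) in *. lra. }
  assert (HB : hnorm (hsub y (T s)) <= eps + (1 - t) * D).
  { pose proof (hnorm_sub_triangle y (T y) (T s)). pose proof (HTne y s Cy Cs).
    rewrite (hnorm_subC y (T y)) in *. lra. }
  rewrite hnorm_subC. unfold s. rewrite hnorm_segment_sub_sqr. fold s. fold D.
  pose proof (hnorm_ge0 (hsub z (T s))). pose proof (hnorm_ge0 (hsub y (T s))).
  assert (0 <= D) by apply hnorm_ge0.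
  pose proof (hnorm_ge0 (hsub (T z) z)).
  assert ((1 - t) * hnorm (hsub z (T s)) ^ 2 <= (1 - t) * (eps + t * D) ^ 2)
    by (apply Rmult_le_compat_l; [lra | apply pow_incr; lra]).
  assert (t * hnorm (hsub y (T s)) ^ 2 <= t * (eps + (1 - t) * D) ^ 2)
    by (apply Rmult_le_compat_l; [lra | apply pow_incr; lra]).
  assert (0 <= eps * D * (1 - 2 * t) ^ 2) by (apply Rmult_le_pos; [nra | apply pow2_ge_0]).
  nra.
Qed.

Lemma tolerance_sqr_le (n M : R) : 1 <= n -> 1 <= M ->
  (1 / (24 * n * M ^ 2 + 1)) ^ 2 + 1 / (24 * n * M ^ 2 + 1) * (2 * n) <= (1 / M) ^ 2.
Proof.
  intros Hn HM.
  set (e := 1 / (24 * n * M ^ 2 + 1)).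
  assert (He : e * (24 * n * M ^ 2 + 1) = 1) by (unfold e; field; nra).
  assert (He0 : 0 < e) by (unfold e; apply Rdiv_lt_0_compat; nra).
  apply Rmult_le_reg_r with (M ^ 2); [nra |].
  replace ((1 / M) ^ 2 * M ^ 2) with 1 by (field; lra).
  nra.
Qed.

Lemma inv_INR_succ_le (a b : nat) : (b <= a)%nat -> 1 / (INR a + 1) <= 1 / (INR b + 1).
Proof.
  intro H. apply le_INR in H. pose proof (pos_INR b).
  unfold Rdiv. rewrite !Rmult_1_l. apply Rinv_le_contravar; lra.
Qed.

Lemma iter_le_iter (g : nat -> nat) (x i j : nat) :
  (forall m, (m <= g m)%nat) -> (i <= j)%nat -> (Nat.iter i g x <= Nat.iter j g x)%nat.
Proof.
  intros Hg Hij. induction Hij as [| j _ IH]; [lia |].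
  simpl. specialize (Hg (Nat.iter j g x)). lia.
Qed.

Lemma le_w_fN (f : nat -> nat) (N m : nat) : (0 < N)%nat -> (m <= w_fN f N m)%nat.
Proof.
  intro HN. unfold w_fN.
  pose proof (Nat.le_max_r (f (24 * N * (m + 1) ^ 2)) (24 * N * (m + 1) ^ 2))%nat.
  rewrite Nat.pow_2_r in *. nia.
Qed.

Section Metastability.

Variables (X : HilbertSpace) (C : X -> Prop) (T : X -> X) (x0 p : X) (N : nat).
Hypotheses (HCcv : hconvex_set C) (HTne : nonexpansive_on C T) (Hp : C p) (HTp : T p = p)
  (HN0 : (0 < N)%nat) (HN : 2 * hnorm (hsub x0 p) <= INR N).

Definition approx_fixed (m : nat) (z : X) : Prop :=
  C z /\ in_ball p N z /\ hnorm (hsub (T z) z) <= 1 / (INR m + 1).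

Lemma approx_fixed_le (m m' : nat) (z : X) :
  (m <= m')%nat -> approx_fixed m' z -> approx_fixed m z.
Proof.
  intros Hm [Cz [Bz Tz]]. repeat split; auto.
  eapply Rle_trans; [exact Tz | apply inv_INR_succ_le; exact Hm].
Qed.

Lemma approx_fixed_fixpoint (m : nat) : approx_fixed m p.
Proof.
  unfold approx_fixed, in_ball. rewrite HTp, hnorm_sub_diag.
  pose proof (pos_INR N). pose proof (pos_INR m).
  split; [exact Hp | split; [lra | apply Rlt_le, Rdiv_lt_0_compat; lra]].
Qed.

Lemma approx_fixed_segment (m : nat) (z y : X) t : 0 <= t <= 1 ->
  approx_fixed (24 * N * (m + 1) ^ 2) z -> approx_fixed (24 * N * (m + 1) ^ 2) y ->
  approx_fixed m (hsegment z y t).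
Proof.
  intros Ht [Cz [Bz Tz]] [Cy [By Ty]].
  assert (HNr : 1 <= INR N) by (apply (le_INR 1); lia).
  assert (HM : 1 <= INR m + 1) by (pose proof (pos_INR m); lra).
  set (eps := 1 / (INR (24 * N * (m + 1) ^ 2) + 1)) in *.
  assert (Heps : eps = 1 / (24 * INR N * (INR m + 1) ^ 2 + 1)).
  { unfold eps. rewrite !mult_INR, pow_INR, plus_INR. simpl (INR 24). simpl (INR 1).
    f_equal. ring. }
  assert (Heps0 : 0 <= eps) by (rewrite Heps; apply Rlt_le, Rdiv_lt_0_compat; nra).
  pose proof (hnorm_displacement_segment_sqr C T z y t eps HCcv HTne Cz Cy Ht Tz Ty) as Hs.
  pose proof (in_ball_sub_le p z y N Bz By) as Hzy.
  pose proof (tolerance_sqr_le (INR N) (INR m + 1) HNr HM) as Htol. rewrite <- Heps in Htol.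
  repeat split.
  - apply HCcv; auto.
  - apply in_ball_segment; auto.
  - apply hnorm_le_of_sqr; [apply Rlt_le, Rdiv_lt_0_compat; lra |].
    assert (eps * hnorm (hsub z y) <= eps * (2 * INR N)) by (apply Rmult_le_compat_l; lra).
    lra.
Qed.

Definition metastable (k n : nat) (f : nat -> nat) (x : X) : Prop :=
  approx_fixed (f n) x /\
  forall y, approx_fixed n y -> hinner (hsub x0 x) (hsub y x) <= 1 / (INR k + 1).

Lemma descent_step (k : nat) (f : nat -> nat) (m : nat) (z : X) :
  ~ metastable k (24 * N * (m + 1) ^ 2) f z -> approx_fixed (w_fN f N m) z ->
  exists z', approx_fixed m z' /\
    hnorm (hsub x0 z') ^ 2
      <= hnorm (hsub x0 z) ^ 2 - (1 / (INR k + 1)) ^ 2 / (4 * INR N ^ 2).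
Proof.
  intros Hnot Hz.
  set (n := (24 * N * (m + 1) ^ 2)%nat) in *.
  set (a := 1 / (INR k + 1)).
  assert (Hzn : approx_fixed n z) by exact (approx_fixed_le _ _ _ (Nat.le_max_r _ _) Hz).
  assert (Hzf : approx_fixed (f n) z) by exact (approx_fixed_le _ _ _ (Nat.le_max_l _ _) Hz).
  destruct (not_all_ex_not _ _ (fun H => Hnot (conj Hzf H))) as [y Hy].
  apply imply_to_and in Hy. destruct Hy as [Hyn Hya]. apply Rnot_le_lt in Hya. fold a in Hya.
  assert (HNr : 1 <= INR N) by (apply (le_INR 1); lia).
  assert (Ha : 0 < a <= 1).
  { pose proof (pos_INR k). unfold a. split; [apply Rdiv_lt_0_compat; lra |].
    apply Rmult_le_reg_r with (INR k + 1); [lra |]. field_simplify; lra. }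
  set (t := a / (4 * INR N ^ 2)).
  assert (Ht : t * (4 * INR N ^ 2) = a) by (unfold t; field; lra).
  assert (Ht0 : 0 < t) by (unfold t; apply Rdiv_lt_0_compat; nra).
  exists (hsegment z y t). split.
  - apply approx_fixed_segment; auto. nra.
  - rewrite hnorm_sub_segment_sqr.
    destruct Hzn as [_ [Bz _]]. destruct Hyn as [_ [By _]].
    pose proof (in_ball_sub_le p y z N By Bz) as Hyz.
    pose proof (hnorm_ge0 (hsub y z)).
    assert (hnorm (hsub y z) ^ 2 <= 4 * INR N ^ 2)
      by (replace (4 * INR N ^ 2) with ((2 * INR N) ^ 2) by ring; apply pow_incr; lra).
    replace (a ^ 2 / (4 * INR N ^ 2)) with (t * a) by (unfold t; field; lra).
    nra.
Qed.

Section Descent.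

Variables (k : nat) (f : nat -> nat).

Local Notation a := (1 / (INR k + 1)).
Local Notation R := (4 * N ^ 4 * (k + 1) ^ 2)%nat.
Local Notation m i := (iterate (w_fN f N) i 0).

Hypothesis no_metastable :
  forall n z, (n <= 24 * N * (m R + 1) ^ 2)%nat -> ~ metastable k n f z.

Lemma descent (j : nat) : (j <= R)%nat ->
  exists z, approx_fixed (m (R - j)) z /\
    hnorm (hsub x0 z) ^ 2 <= INR N ^ 2 / 4 - INR j * (a ^ 2 / (4 * INR N ^ 2)).
Proof.
  induction j as [| j IH]; intro Hj.
  - exists p. rewrite Nat.sub_0_r. split; [apply approx_fixed_fixpoint |].
    pose proof (hnorm_ge0 (hsub x0 p)). simpl (INR 0). nra.
  - destruct (IH ltac:(lia)) as [z [Hz Dz]].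
    replace (R - j)%nat with (S (R - S j)) in Hz by lia.
    set (i := (R - S j)%nat) in *.
    assert (Hmi : (m i <= m R)%nat)
      by (apply iter_le_iter; [intro; apply le_w_fN; exact HN0 | lia]).
    destruct (descent_step k f (m i) z) as [z' [Hz' Dz']]; [| exact Hz |].
    + apply no_metastable, Nat.mul_le_mono_l, Nat.pow_le_mono_l. lia.
    + exists z'. split; [exact Hz' |]. rewrite S_INR. lra.
Qed.

Lemma no_metastable_absurd : False.
Proof.
  destruct (descent R (le_n R)) as [z [_ Dz]].
  assert (HNr : 1 <= INR N) by (apply (le_INR 1); lia).
  assert (ER : INR R * (a ^ 2 / (4 * INR N ^ 2)) = INR N ^ 2).
  { rewrite !mult_INR, !pow_INR, plus_INR. simpl (INR 4). simpl (INR 1).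
    field. pose proof (pos_INR k). lra. }
  pose proof (hnorm_ge0 (hsub x0 z)). nra.
Qed.

End Descent.

Lemma exists_metastable (k : nat) (f : nat -> nat) :
  exists n x, (n <= 24 * N * (iterate (w_fN f N) (4 * N ^ 4 * (k + 1) ^ 2) 0 + 1) ^ 2)%nat
    /\ metastable k n f x.
Proof.
  apply NNPP. intro H. apply (no_metastable_absurd k f).
  intros n z Hn Hz. apply H. exists n, z. auto.
Qed.

End Metastability.

Theorem mainTheorem2 (X : HilbertSpace) (C : X -> Prop) (T : X -> X) (x0 p : X)
  (N : nat)
  (HCcl : hclosed_set C) (HCcv : hconvex_set C)
  (HTC : maps_into C T) (HTne : nonexpansive_on C T)
  (Hx0 : C x0) (Hp : C p) (HTp : T p = p)
  (HN0 : (0 < N)%nat) (HN : 2 * hnorm (hsub x0 p) <= INR N) :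
  forall (k : nat) (f : nat -> nat), monotone f ->
  exists (n : nat) (x : X),
    (n <= 24 * N * (iterate (w_fN f N) (4 * N ^ 4 * (k + 1) ^ 2) 0 + 1) ^ 2)%nat /\
    C x /\ in_ball p N x /\
    hnorm (hsub (T x) x) <= 1 / (INR (f n) + 1) /\
    (forall y : X, C y -> in_ball p N y ->
       hnorm (hsub (T y) y) <= 1 / (INR n + 1) ->
       hinner (hsub x0 x) (hsub y x) <= 1 / (INR k + 1)).
Proof.
  intros k f _.
  destruct (exists_metastable X C T x0 p N HCcv HTne Hp HTp HN0 HN k f)
    as [n [x [Hn [[Cx [Bx Tx]] Hx]]]].
  exists n, x. repeat split; auto.
  intros y Cy By Ty. apply Hx. repeat split; assumption.
Qed.
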